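(* Let $a\neq 0$ be a real constant and consider the Hirota–Ramani equation $$u_t-u_{xxt}+a\,u_x(1-u_t)=0$$ for a scalar function $u(x,t)$. A vector field $\mathbf v=\xi(x,t,u)\partial_x+\eta(x,t,u)\partial_t+\varphi(x,t,u)\partial_u$ is an infinitesimal (classical, Lie point) symmetry of this equation if and only if $$\xi=-\tfrac{x}{3}c_1+c_3,\qquad \eta=c_1t+c_2,\qquad \varphi=\Big(\tfrac{2t}{3}+\tfrac{u}{3}-\tfrac{2x}{3a}\Big)c_1+c_4$$ for arbitrary constants $c_1,c_2,c_3,c_4$. Consequently the Lie algebra of infinitesimal point symmetries of the equation is spanned by $$\mathbf v_1=\partial_x,\quad \mathbf v_2=\partial_t,\quad \mathbf v_3=\tfrac1a\partial_u,\quad \mathbf v_4=3t\partial_t-x\partial_x+\Big(2t+u-\tfrac{2x}{a}\Big)\partial_u .$$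
   Context: A vector field $\mathbf v$ on the space of variables $(x,t,u)$ is an infinitesimal symmetry of the equation $\Delta=u_t-u_{xxt}+a u_x(1-u_t)=0$ if its third prolongation $\mathrm{Pr}^{(3)}\mathbf v$ satisfies $\mathrm{Pr}^{(3)}\mathbf v[\Delta]=0$ whenever $\Delta=0$, i.e. the local one-parameter group it generates maps solutions to solutions. *)

From Stdlib Require Import Reals.
From Coquelicot Require Import Coquelicot.
Open Scope R_scope.

Definition dx2 (f : R -> R -> R) : R -> R -> R :=
  fun x t => Derive (fun y => f y t) x.
Definition dt2 (f : R -> R -> R) : R -> R -> R :=
  fun x t => Derive (fun s => f x s) t.

Fixpoint Ck2 (k : nat) (f : R -> R -> R) : Prop :=
  match k with
  | O => forall x t, continuous (fun p : R * R => f (fst p) (snd p)) (x, t)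
  | S k' =>
      (forall x t, continuous (fun p : R * R => f (fst p) (snd p)) (x, t)) /\
      (forall x t, ex_derive (fun y => f y t) x /\ ex_derive (fun s => f x s) t) /\
      Ck2 k' (dx2 f) /\ Ck2 k' (dt2 f)
  end.
Definition smooth2 (f : R -> R -> R) : Prop := forall k, Ck2 k f.

Definition d1 (f : R -> R -> R -> R) : R -> R -> R -> R :=
  fun x t u => Derive (fun y => f y t u) x.
Definition d2 (f : R -> R -> R -> R) : R -> R -> R -> R :=
  fun x t u => Derive (fun s => f x s u) t.
Definition d3 (f : R -> R -> R -> R) : R -> R -> R -> R :=
  fun x t u => Derive (fun w => f x t w) u.

Fixpoint Ck3 (k : nat) (f : R -> R -> R -> R) : Prop :=
  match k with
  | O => forall x t u,
      continuous (fun p : R * R * R => f (fst (fst p)) (snd (fst p)) (snd p)) (x, t, u)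
  | S k' =>
      (forall x t u,
        continuous (fun p : R * R * R => f (fst (fst p)) (snd (fst p)) (snd p)) (x, t, u)) /\
      (forall x t u, ex_derive (fun y => f y t u) x /\
                     ex_derive (fun s => f x s u) t /\
                     ex_derive (fun w => f x t w) u) /\
      Ck3 k' (d1 f) /\ Ck3 k' (d2 f) /\ Ck3 k' (d3 f)
  end.
Definition smooth3 (f : R -> R -> R -> R) : Prop := forall k, Ck3 k f.

(* A jet point over (x,t) is J : nat -> nat -> R, J i j = u_{x^i t^j};
   J 0 0 is the dependent variable u itself. *)
Definition jet2 (u : R -> R -> R) (x t : R) : nat -> nat -> R :=
  fun i j => Nat.iter i dx2 (Nat.iter j dt2 u) x t.

Definition difffun := R -> R -> (nat -> nat -> R) -> R.

Definition updJ (J : nat -> nat -> R) (i j : nat) (s : R) : nat -> nat -> R :=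
  fun k l => if andb (Nat.eqb k i) (Nat.eqb l j) then s else J k l.

Definition dJ (F : difffun) (x t : R) (J : nat -> nat -> R) (i j : nat) : R :=
  Derive (fun s => F x t (updJ J i j s)) (J i j).

Definition charQ (xi eta phi : R -> R -> R -> R) (u : R -> R -> R) : R -> R -> R :=
  fun x t => phi x t (u x t) - xi x t (u x t) * dx2 u x t
             - eta x t (u x t) * dt2 u x t.

(* prolongation coefficient phi^J = D_J Q + xi u_{J,x} + eta u_{J,t},
   J = x^i t^j, evaluated on the prolonged graph of u at (x,t)
   (total derivatives of Q along u are the ordinary partial derivatives of
   the composite function charQ). phi^{(0,0)} = phi. *)
Definition prol_coef (xi eta phi : R -> R -> R -> R) (u : R -> R -> R)
  (i j : nat) (x t : R) : R :=
  Nat.iter i dx2 (Nat.iter j dt2 (charQ xi eta phi u)) x t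
  + xi x t (u x t) * jet2 u x t (S i) j
  + eta x t (u x t) * jet2 u x t i (S j).

Definition prolong3 (xi eta phi : R -> R -> R -> R) (F : difffun)
  (u : R -> R -> R) (x t : R) : R :=
  let J := jet2 u x t in
  xi x t (u x t) * Derive (fun y => F y t J) x
  + eta x t (u x t) * Derive (fun s => F x s J) t
  + sum_n (fun i => sum_n (fun j =>
        if Nat.leb (i + j) 3 then prol_coef xi eta phi u i j x t * dJ F x t J i j
        else 0) 3) 3.

(* infinitesimal symmetry of a third-order equation F = 0:
   Pr^(3) v [F] = 0 whenever F = 0 (on jet space; every 3-jet is realized
   by a smooth (polynomial) function u). *)
Definition is_symmetry3 (F : difffun) (xi eta phi : R -> R -> R -> R) : Prop :=
  forall u : R -> R -> R, smooth2 u ->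
  forall x t : R, F x t (jet2 u x t) = 0 -> prolong3 xi eta phi F u x t = 0.

Definition HR (a : R) : difffun :=
  fun x t J => J 0%nat 1%nat - J 2%nat 1%nat + a * J 1%nat 0%nat * (1 - J 0%nat 1%nat).

Definition vfield := ((R -> R -> R -> R) * (R -> R -> R -> R) * (R -> R -> R -> R))%type.
Definition v1 : vfield := (fun _ _ _ => 1, fun _ _ _ => 0, fun _ _ _ => 0).
Definition v2 : vfield := (fun _ _ _ => 0, fun _ _ _ => 1, fun _ _ _ => 0).
Definition v3 (a : R) : vfield := (fun _ _ _ => 0, fun _ _ _ => 0, fun _ _ _ => 1 / a).
Definition v4 (a : R) : vfield :=
  (fun x _ _ => - x, fun _ t _ => 3 * t, fun x t u => 2 * t + u - 2 * x / a).
Definition vxi (v : vfield) := fst (fst v).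
Definition veta (v : vfield) := snd (fst v).
Definition vphi (v : vfield) := snd v.

(* On solutions, Pr^(3) v [u_t - u_xxt + a u_x (1 - u_t)] at a point depends only on the
   partial derivatives of xi, eta, phi at (x, t, u) and on the 3-jet of u; eliminating u_xxt by
   the equation leaves a polynomial in the free jet coordinates u_x, u_t, u_xx, u_xt, u_tt,
   u_xxx, u_xtt.  Every such jet is the jet at that point of a cubic polynomial solving the
   equation there, so v is a symmetry iff this polynomial vanishes identically.  Evaluating it
   at 0/1 jets isolates its coefficients: xi_t = xi_u = eta_x = eta_u = 0, phi_uu = phi_tu = 0,
   phi_u = - xi_x, phi_t = eta_t + xi_x and xi_xx = 2 phi_xu.  Differentiating phi_u = - xi_x
   in x forces xi_xx = 0; with the two lowest-order coefficients this makes every first partial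
   derivative of xi, eta and phi constant and determined by c1 = eta_t.  Conversely the
   resulting affine fields annihilate the polynomial identically. *)

From Stdlib Require Import Reals Lra FunctionalExtensionality.
From Coquelicot Require Import Coquelicot.
Open Scope R_scope.

(** * Smooth functions of (x, t) and (x, t, u) *)

Definition plus2 (F G : R -> R -> R) : R -> R -> R := fun x t => F x t + G x t.
Definition mult2 (F G : R -> R -> R) : R -> R -> R := fun x t => F x t * G x t.
Definition const2 (c : R) : R -> R -> R := fun _ _ => c.
Definition on_graph (g : R -> R -> R -> R) (u : R -> R -> R) : R -> R -> R :=
  fun x t => g x t (u x t).

Definition ex_derive2 (f : R -> R -> R) : Prop :=
  forall x t, ex_derive (fun y => f y t) x /\ ex_derive (fun s => f x s) t.

Lemma Ck2_cont k f : Ck2 k f -> Ck2 0 f.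
Proof. destruct k; simpl; tauto. Qed.

Lemma Ck2_ex_derive2 k f : Ck2 (S k) f -> ex_derive2 f.
Proof. simpl; tauto. Qed.

Lemma Ck2_dx2 k f : Ck2 (S k) f -> Ck2 k (dx2 f).
Proof. simpl; tauto. Qed.

Lemma Ck2_dt2 k f : Ck2 (S k) f -> Ck2 k (dt2 f).
Proof. simpl; tauto. Qed.

Lemma Ck2_pred k : forall f, Ck2 (S k) f -> Ck2 k f.
Proof.
  induction k as [|k IH]; intros f Hf; [exact (Ck2_cont _ _ Hf)|].
  destruct Hf as (Hc & Hd & Hx & Ht).
  split; [exact Hc|]; split; [exact Hd|]; split; apply IH; assumption.
Qed.

Lemma smooth2_dx2 f : smooth2 f -> smooth2 (dx2 f).
Proof. intros Hf k; exact (Ck2_dx2 _ _ (Hf (S k))). Qed.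

Lemma smooth2_dt2 f : smooth2 f -> smooth2 (dt2 f).
Proof. intros Hf k; exact (Ck2_dt2 _ _ (Hf (S k))). Qed.

Lemma smooth2_ex_derive2 f : smooth2 f -> ex_derive2 f.
Proof. intros Hf; exact (Ck2_ex_derive2 _ _ (Hf 1%nat)). Qed.

Section Algebra2.
Variables F G : R -> R -> R.
Hypotheses (HF : ex_derive2 F) (HG : ex_derive2 G).

Lemma dx2_plus : dx2 (plus2 F G) = plus2 (dx2 F) (dx2 G).
Proof.
  unfold dx2, plus2.
  apply functional_extensionality; intro x; apply functional_extensionality; intro t.
  apply (Derive_plus (fun y => F y t) (fun y => G y t));
    [exact (proj1 (HF x t)) | exact (proj1 (HG x t))].
Qed.

Lemma dt2_plus : dt2 (plus2 F G) = plus2 (dt2 F) (dt2 G).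
Proof.
  unfold dt2, plus2.
  apply functional_extensionality; intro x; apply functional_extensionality; intro t.
  apply (Derive_plus (fun s => F x s) (fun s => G x s));
    [exact (proj2 (HF x t)) | exact (proj2 (HG x t))].
Qed.

Lemma dx2_mult : dx2 (mult2 F G) = plus2 (mult2 (dx2 F) G) (mult2 F (dx2 G)).
Proof.
  unfold dx2, mult2.
  apply functional_extensionality; intro x; apply functional_extensionality; intro t.
  apply (Derive_mult (fun y => F y t) (fun y => G y t));
    [exact (proj1 (HF x t)) | exact (proj1 (HG x t))].
Qed.

Lemma dt2_mult : dt2 (mult2 F G) = plus2 (mult2 (dt2 F) G) (mult2 F (dt2 G)).
Proof.
  unfold dt2, mult2.
  apply functional_extensionality; intro x; apply functional_extensionality; intro t.
  apply (Derive_mult (fun s => F x s) (fun s => G x s));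
    [exact (proj2 (HF x t)) | exact (proj2 (HG x t))].
Qed.

Lemma ex_derive2_plus : ex_derive2 (plus2 F G).
Proof.
  intros x t; unfold plus2; split.
  - apply (ex_derive_plus (fun y => F y t) (fun y => G y t));
    [exact (proj1 (HF x t)) | exact (proj1 (HG x t))].
  - apply (ex_derive_plus (fun s => F x s) (fun s => G x s));
    [exact (proj2 (HF x t)) | exact (proj2 (HG x t))].
Qed.

Lemma ex_derive2_mult : ex_derive2 (mult2 F G).
Proof.
  intros x t; unfold mult2; split.
  - apply (ex_derive_mult (fun y => F y t) (fun y => G y t));
    [exact (proj1 (HF x t)) | exact (proj1 (HG x t))].
  - apply (ex_derive_mult (fun s => F x s) (fun s => G x s));
    [exact (proj2 (HF x t)) | exact (proj2 (HG x t))].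
Qed.

End Algebra2.

Lemma dx2_const c : dx2 (const2 c) = const2 0.
Proof.
  do 2 (apply functional_extensionality; intro).
  unfold dx2, const2; apply Derive_const.
Qed.

Lemma dt2_const c : dt2 (const2 c) = const2 0.
Proof.
  do 2 (apply functional_extensionality; intro).
  unfold dt2, const2; apply Derive_const.
Qed.

Lemma continuous2_plus F G : Ck2 0 F -> Ck2 0 G -> Ck2 0 (plus2 F G).
Proof.
  intros HF HG x t.
  apply (continuous_plus (fun p : R * R => F (fst p) (snd p))
                         (fun p : R * R => G (fst p) (snd p))); auto.
Qed.

Lemma Ck2_plus k : forall F G, Ck2 k F -> Ck2 k G -> Ck2 k (plus2 F G).
Proof.
  induction k as [|k IH]; intros F G HF HG; [exact (continuous2_plus _ _ HF HG)|].
  pose proof (Ck2_ex_derive2 _ _ HF) as HF'.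
  pose proof (Ck2_ex_derive2 _ _ HG) as HG'.
  split; [exact (continuous2_plus _ _ (Ck2_cont _ _ HF) (Ck2_cont _ _ HG))|].
  split; [exact (ex_derive2_plus _ _ HF' HG')|].
  rewrite dx2_plus, dt2_plus by assumption.
  split; apply IH; first [apply Ck2_dx2 | apply Ck2_dt2]; assumption.
Qed.

Lemma continuous2_mult F G : Ck2 0 F -> Ck2 0 G -> Ck2 0 (mult2 F G).
Proof.
  intros HF HG x t.
  apply (continuous_mult (fun p : R * R => F (fst p) (snd p))
                         (fun p : R * R => G (fst p) (snd p))); auto.
Qed.

Lemma Ck2_mult k : forall F G, Ck2 k F -> Ck2 k G -> Ck2 k (mult2 F G).
Proof.
  induction k as [|k IH]; intros F G HF HG; [exact (continuous2_mult _ _ HF HG)|].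
  pose proof (Ck2_ex_derive2 _ _ HF) as HF'.
  pose proof (Ck2_ex_derive2 _ _ HG) as HG'.
  split; [exact (continuous2_mult _ _ (Ck2_cont _ _ HF) (Ck2_cont _ _ HG))|].
  split; [exact (ex_derive2_mult _ _ HF' HG')|].
  rewrite dx2_mult, dt2_mult by assumption.
  split; apply Ck2_plus; apply IH;
    first [apply Ck2_dx2 | apply Ck2_dt2 | apply Ck2_pred]; assumption.
Qed.

Lemma Ck2_const k : forall c, Ck2 k (const2 c).
Proof.
  induction k as [|k IH]; intros c.
  - intros x t; apply continuous_const.
  - split; [intros x t; apply continuous_const|].
    split; [intros x t; unfold const2; split; apply ex_derive_const|].
    rewrite dx2_const, dt2_const; auto.
Qed.

Lemma smooth2_plus F G : smooth2 F -> smooth2 G -> smooth2 (plus2 F G).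
Proof. intros HF HG k; apply Ck2_plus; auto. Qed.

Lemma smooth2_mult F G : smooth2 F -> smooth2 G -> smooth2 (mult2 F G).
Proof. intros HF HG k; apply Ck2_mult; auto. Qed.

Lemma smooth2_const c : smooth2 (const2 c).
Proof. intros k; apply Ck2_const. Qed.

Lemma smooth2_fst : smooth2 (fun x _ => x).
Proof.
  assert (Hd : dx2 (fun x _ => x) = const2 1 /\ dt2 (fun x _ => x) = const2 0).
  { split; do 2 (apply functional_extensionality; intro);
      apply is_derive_unique; auto_derive; auto. }
  intros [|k]; [intros x t; apply continuous_fst|].
  split; [intros x t; apply continuous_fst|].
  split; [intros x t; split; auto_derive; auto|].
  destruct Hd as [-> ->]; split; apply Ck2_const.
Qed.

Lemma smooth2_snd : smooth2 (fun _ t => t).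
Proof.
  assert (Hd : dx2 (fun _ t => t) = const2 0 /\ dt2 (fun _ t => t) = const2 1).
  { split; do 2 (apply functional_extensionality; intro);
      apply is_derive_unique; auto_derive; auto. }
  intros [|k]; [intros x t; apply continuous_snd|].
  split; [intros x t; apply continuous_snd|].
  split; [intros x t; split; auto_derive; auto|].
  destruct Hd as [-> ->]; split; apply Ck2_const.
Qed.

Lemma Ck3_cont k f : Ck3 k f -> Ck3 0 f.
Proof. destruct k; simpl; tauto. Qed.

Lemma Ck3_ex_derive k f : Ck3 (S k) f -> forall x t u,
  ex_derive (fun y => f y t u) x /\ ex_derive (fun s => f x s u) t /\
  ex_derive (fun w => f x t w) u.
Proof. simpl; tauto. Qed.

Lemma smooth3_d1 f : smooth3 f -> smooth3 (d1 f).
Proof. intros Hf k; destruct (Hf (S k)) as (_ & _ & H & _); exact H. Qed.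

Lemma smooth3_d2 f : smooth3 f -> smooth3 (d2 f).
Proof. intros Hf k; destruct (Hf (S k)) as (_ & _ & _ & H & _); exact H. Qed.

Lemma smooth3_d3 f : smooth3 f -> smooth3 (d3 f).
Proof. intros Hf k; destruct (Hf (S k)) as (_ & _ & _ & _ & H); exact H. Qed.

Lemma continuous_pair {U V W : UniformSpace} (f : U -> V) (g : U -> W) x :
  continuous f x -> continuous g x -> continuous (fun y => (f y, g y)) x.
Proof.
  intros Hf Hg.
  apply (continuous_comp_2 f g (fun a b => (a, b))); auto.
  apply continuous_ext with (f := fun p => p); [intros []; reflexivity|].
  apply continuous_id.
Qed.

Lemma continuous_Ck3_comp (f : R -> R -> R -> R) (g1 g2 g3 : R * R -> R) p :
  Ck3 0 f -> continuous g1 p -> continuous g2 p -> continuous g3 p ->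
  continuous (fun q => f (g1 q) (g2 q) (g3 q)) p.
Proof.
  intros Hf H1 H2 H3.
  apply (continuous_comp (fun q => (g1 q, g2 q, g3 q))
           (fun r : R * R * R => f (fst (fst r)) (snd (fst r)) (snd r))).
  - repeat apply continuous_pair; assumption.
  - apply Hf.
Qed.

Lemma is_derive_comp2 (h : R -> R -> R) (w : R -> R) y0 dw :
  (forall a b, ex_derive (fun z => h z b) a) ->
  ex_derive (fun z => h y0 z) (w y0) ->
  continuous (fun p : R * R => Derive (fun z => h z (snd p)) (fst p)) (y0, w y0) ->
  is_derive w y0 dw ->
  is_derive (fun y => h y (w y)) y0
    (Derive (fun z => h z (w y0)) y0 + Derive (fun z => h y0 z) (w y0) * dw).
Proof.
  intros Hx Hy Hc Hw.
  eapply filterdiff_ext_lin.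
  - apply (filterdiff_comp'_2 (fun y : R => y) w h y0 (fun y => y) (fun y => scal y dw)
       (fun a b => plus (scal a (Derive (fun z => h z (w y0)) y0))
                        (scal b (Derive (fun z => h y0 z) (w y0))))).
    + apply filterdiff_id.
    + exact Hw.
    + apply is_derive_filterdiff with (dfx := fun a b => Derive (fun z => h z b) a).
      * apply filter_forall; intros [a b]; apply Derive_correct, Hx.
      * apply Derive_correct, Hy.
      * exact Hc.
  - intros y; simpl; unfold scal, plus; simpl; unfold mult; simpl; ring.
Qed.

Section OnGraph.
Variables (g : R -> R -> R -> R) (u : R -> R -> R).
Hypotheses (Hg : Ck3 1 g) (Hu : ex_derive2 u).

Lemma is_derive_on_graph_x x t :
  is_derive (fun y => g y t (u y t)) x (d1 g x t (u x t) + d3 g x t (u x t) * dx2 u x t).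
Proof.
  apply (is_derive_comp2 (fun y w => g y t w) (fun y => u y t) x).
  - intros y w; exact (proj1 (Ck3_ex_derive _ _ Hg y t w)).
  - exact (proj2 (proj2 (Ck3_ex_derive _ _ Hg x t (u x t)))).
  - apply (continuous_Ck3_comp (d1 g) fst (fun _ => t) snd);
      [exact (proj1 (proj2 (proj2 Hg))) | apply continuous_fst | apply continuous_const
      | apply continuous_snd].
  - apply Derive_correct, (proj1 (Hu x t)).
Qed.

Lemma is_derive_on_graph_t x t :
  is_derive (fun s => g x s (u x s)) t (d2 g x t (u x t) + d3 g x t (u x t) * dt2 u x t).
Proof.
  apply (is_derive_comp2 (fun s w => g x s w) (fun s => u x s) t).
  - intros s w; exact (proj1 (proj2 (Ck3_ex_derive _ _ Hg x s w))).
  - exact (proj2 (proj2 (Ck3_ex_derive _ _ Hg x t (u x t)))).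
  - apply (continuous_Ck3_comp (d2 g) (fun _ => x) fst snd);
      [exact (proj1 (proj2 (proj2 (proj2 Hg)))) | apply continuous_const | apply continuous_fst
      | apply continuous_snd].
  - apply Derive_correct, (proj2 (Hu x t)).
Qed.

Lemma dx2_on_graph :
  dx2 (on_graph g u) = plus2 (on_graph (d1 g) u) (mult2 (on_graph (d3 g) u) (dx2 u)).
Proof.
  do 2 (apply functional_extensionality; intro).
  apply is_derive_unique, is_derive_on_graph_x.
Qed.

Lemma dt2_on_graph :
  dt2 (on_graph g u) = plus2 (on_graph (d2 g) u) (mult2 (on_graph (d3 g) u) (dt2 u)).
Proof.
  do 2 (apply functional_extensionality; intro).
  apply is_derive_unique, is_derive_on_graph_t.
Qed.

Lemma ex_derive2_on_graph : ex_derive2 (on_graph g u).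
Proof.
  intros x t; split; eexists; [apply is_derive_on_graph_x | apply is_derive_on_graph_t].
Qed.

End OnGraph.

Lemma Ck2_on_graph u (Hu : smooth2 u) k : forall g, smooth3 g -> Ck2 k (on_graph g u).
Proof.
  assert (Hc : forall g, smooth3 g -> Ck2 0 (on_graph g u)).
  { intros g Hg x t.
    apply (continuous_Ck3_comp g fst snd (fun p => u (fst p) (snd p)));
      [exact (Ck3_cont _ _ (Hg 0%nat)) | apply continuous_fst | apply continuous_snd
      | exact (Hu 0%nat x t)]. }
  induction k as [|k IH]; intros g Hg; [auto|].
  pose proof (smooth2_ex_derive2 u Hu) as Hu'.
  split; [exact (Hc g Hg)|].
  split; [exact (ex_derive2_on_graph g u (Hg 1%nat) Hu')|].
  rewrite dx2_on_graph, dt2_on_graph by first [exact (Hg 1%nat) | exact Hu'].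
  split; apply Ck2_plus; try apply Ck2_mult;
    first [ apply IH; auto using smooth3_d1, smooth3_d2, smooth3_d3
          | apply Ck2_dx2, Hu | apply Ck2_dt2, Hu ].
Qed.

Lemma smooth2_on_graph g u : smooth3 g -> smooth2 u -> smooth2 (on_graph g u).
Proof. intros Hg Hu k; apply Ck2_on_graph; auto. Qed.

Lemma Derive_comm (F : R -> R -> R) x y :
  (forall a b, ex_derive (fun z => F z b) a /\ ex_derive (fun z => F a z) b /\
     ex_derive (fun z => Derive (fun w => F z w) b) a /\
     ex_derive (fun z => Derive (fun w => F w z) a) b) ->
  continuous (fun p : R * R => Derive (fun z => Derive (fun w => F z w) (snd p)) (fst p)) (x, y) ->
  continuous (fun p : R * R => Derive (fun z => Derive (fun w => F w z) (fst p)) (snd p)) (x, y) ->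
  Derive (fun z => Derive (fun w => F z w) y) x = Derive (fun z => Derive (fun w => F w z) x) y.
Proof.
  intros H C1 C2.
  apply Schwarz.
  - exists (mkposreal 1 Rlt_0_1); intros a b _ _; apply H.
  - apply continuity_2d_pt_filterlim, C1.
  - apply continuity_2d_pt_filterlim, C2.
Qed.

Lemma dt2_dx2 f : smooth2 f -> dt2 (dx2 f) = dx2 (dt2 f).
Proof.
  intros Hf.
  apply functional_extensionality; intro x; apply functional_extensionality; intro t.
  symmetry; apply (Derive_comm f x t).
  - intros a b; repeat split.
    + exact (proj1 (smooth2_ex_derive2 f Hf a b)).
    + exact (proj2 (smooth2_ex_derive2 f Hf a b)).
    + exact (proj1 (smooth2_ex_derive2 _ (smooth2_dt2 f Hf) a b)).
    + exact (proj2 (smooth2_ex_derive2 _ (smooth2_dx2 f Hf) a b)).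
  - exact (smooth2_dx2 _ (smooth2_dt2 f Hf) 0%nat x t).
  - exact (smooth2_dt2 _ (smooth2_dx2 f Hf) 0%nat x t).
Qed.

Section Schwarz3.
Variable f : R -> R -> R -> R.
Hypothesis Hf : smooth3 f.

Lemma d2_d1 : d2 (d1 f) = d1 (d2 f).
Proof.
  apply functional_extensionality; intro x; apply functional_extensionality; intro t;
    apply functional_extensionality; intro u.
  symmetry; apply (Derive_comm (fun y s => f y s u) x t).
  - intros a b; repeat split.
    + exact (proj1 (Ck3_ex_derive 0 f (Hf 1%nat) a b u)).
    + exact (proj1 (proj2 (Ck3_ex_derive 0 f (Hf 1%nat) a b u))).
    + exact (proj1 (Ck3_ex_derive 0 _ (smooth3_d2 f Hf 1%nat) a b u)).
    + exact (proj1 (proj2 (Ck3_ex_derive 0 _ (smooth3_d1 f Hf 1%nat) a b u))).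
  - apply (continuous_Ck3_comp (d1 (d2 f)) fst snd (fun _ => u));
      [exact (smooth3_d1 _ (smooth3_d2 f Hf) 0%nat) | apply continuous_fst
      | apply continuous_snd | apply continuous_const].
  - apply (continuous_Ck3_comp (d2 (d1 f)) fst snd (fun _ => u));
      [exact (smooth3_d2 _ (smooth3_d1 f Hf) 0%nat) | apply continuous_fst
      | apply continuous_snd | apply continuous_const].
Qed.

Lemma d3_d1 : d3 (d1 f) = d1 (d3 f).
Proof.
  apply functional_extensionality; intro x; apply functional_extensionality; intro t;
    apply functional_extensionality; intro u.
  symmetry; apply (Derive_comm (fun y w => f y t w) x u).
  - intros a b; repeat split.
    + exact (proj1 (Ck3_ex_derive 0 f (Hf 1%nat) a t b)).
    + exact (proj2 (proj2 (Ck3_ex_derive 0 f (Hf 1%nat) a t b))).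
    + exact (proj1 (Ck3_ex_derive 0 _ (smooth3_d3 f Hf 1%nat) a t b)).
    + exact (proj2 (proj2 (Ck3_ex_derive 0 _ (smooth3_d1 f Hf 1%nat) a t b))).
  - apply (continuous_Ck3_comp (d1 (d3 f)) fst (fun _ => t) snd);
      [exact (smooth3_d1 _ (smooth3_d3 f Hf) 0%nat) | apply continuous_fst
      | apply continuous_const | apply continuous_snd].
  - apply (continuous_Ck3_comp (d3 (d1 f)) fst (fun _ => t) snd);
      [exact (smooth3_d3 _ (smooth3_d1 f Hf) 0%nat) | apply continuous_fst
      | apply continuous_const | apply continuous_snd].
Qed.

Lemma d3_d2 : d3 (d2 f) = d2 (d3 f).
Proof.
  apply functional_extensionality; intro x; apply functional_extensionality; intro t;
    apply functional_extensionality; intro u.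
  symmetry; apply (Derive_comm (fun s w => f x s w) t u).
  - intros a b; repeat split.
    + exact (proj1 (proj2 (Ck3_ex_derive 0 f (Hf 1%nat) x a b))).
    + exact (proj2 (proj2 (Ck3_ex_derive 0 f (Hf 1%nat) x a b))).
    + exact (proj1 (proj2 (Ck3_ex_derive 0 _ (smooth3_d3 f Hf 1%nat) x a b))).
    + exact (proj2 (proj2 (Ck3_ex_derive 0 _ (smooth3_d2 f Hf 1%nat) x a b))).
  - apply (continuous_Ck3_comp (d2 (d3 f)) (fun _ => x) fst snd);
      [exact (smooth3_d2 _ (smooth3_d3 f Hf) 0%nat) | apply continuous_const
      | apply continuous_fst | apply continuous_snd].
  - apply (continuous_Ck3_comp (d3 (d2 f)) (fun _ => x) fst snd);
      [exact (smooth3_d3 _ (smooth3_d2 f Hf) 0%nat) | apply continuous_const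
      | apply continuous_fst | apply continuous_snd].
Qed.

End Schwarz3.

(** * The prolonged equation *)

Lemma dJ_HR a x t J i j :
  dJ (HR a) x t J i j =
  if andb (Nat.eqb i 0) (Nat.eqb j 1) then 1 - a * J 1%nat 0%nat
  else if andb (Nat.eqb i 2) (Nat.eqb j 1) then -1
  else if andb (Nat.eqb i 1) (Nat.eqb j 0) then a * (1 - J 0%nat 1%nat)
  else 0.
Proof.
  unfold dJ, HR, updJ.
  destruct i as [|[|[|i]]]; destruct j as [|[|j]]; simpl;
    first [apply Derive_const | apply is_derive_unique; auto_derive; auto; ring].
Qed.

Lemma prolong3_HR a xi eta phi u x t :
  prolong3 xi eta phi (HR a) u x t =
    prol_coef xi eta phi u 0 1 x t * (1 - a * jet2 u x t 1%nat 0%nat)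
  - prol_coef xi eta phi u 2 1 x t
  + prol_coef xi eta phi u 1 0 x t * (a * (1 - jet2 u x t 0%nat 1%nat)).
Proof.
  unfold prolong3.
  repeat (rewrite sum_Sn || rewrite sum_O).
  rewrite !dJ_HR; unfold HR; rewrite !Derive_const; simpl.
  unfold plus; simpl; ring.
Qed.

Lemma charQ_plus_mult xi eta phi u :
  charQ xi eta phi u =
  plus2 (on_graph phi u)
    (mult2 (const2 (-1))
       (plus2 (mult2 (on_graph xi u) (dx2 u)) (mult2 (on_graph eta u) (dt2 u)))).
Proof.
  do 2 (apply functional_extensionality; intro).
  unfold charQ, plus2, mult2, const2, on_graph; ring.
Qed.

(* [Pr^(3) v [HR a]] on solutions, with [u_xxt] eliminated by the equation; its coefficients
   as a polynomial in the jet coordinates are the determining equations. *)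
Definition HR_determining (a : R) (xi eta phi : R -> R -> R -> R)
    (x t u ux ut uxx uxt utt uxxx uxtt : R) : R :=
  let ev (f : R -> R -> R -> R) := f x t u in
  a * ev (d1 phi) + ev (d2 phi) - ev (d1 (d1 (d2 phi)))
    + (a * ev (d1 xi) - ev (d2 xi) + ev (d1 (d1 (d2 xi))) + a * ev (d2 eta) - a * ev (d2 phi)
        - 2 * ev (d1 (d2 (d3 phi)))) * ux
    + (2 * ev (d1 xi) - a * ev (d1 eta) + ev (d1 (d1 (d2 eta))) - a * ev (d1 phi)
        - ev (d1 (d1 (d3 phi)))) * ut
    + (2 * ev (d1 (d2 xi)) - ev (d2 (d3 phi))) * uxx
    + (ev (d1 (d1 xi)) + 2 * ev (d1 (d2 eta)) - 2 * ev (d1 (d3 phi))) * uxt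
    + ev (d1 (d1 eta)) * utt
    + ev (d2 xi) * uxxx
    + 2 * ev (d1 eta) * uxtt
    + (a * ev (d2 xi) + 2 * a * ev (d3 xi) + 2 * ev (d1 (d2 (d3 xi)))
        - ev (d2 (d3 (d3 phi)))) * ux * ux
    + 3 * ev (d2 (d3 xi)) * ux * uxx
    + (4 * ev (d1 (d3 xi)) + 2 * ev (d2 (d3 eta)) - 2 * ev (d3 (d3 phi))) * ux * uxt
    + 2 * ev (d3 eta) * ux * uxtt
    + (- a * ev (d1 xi) + 2 * ev (d3 xi) + ev (d1 (d1 (d3 xi))) + a * ev (d3 eta)
        + 2 * ev (d1 (d2 (d3 eta))) - a * ev (d3 phi) - 2 * ev (d1 (d3 (d3 phi)))) * ux * ut
    + (a * ev (d1 eta) + ev (d3 eta) + ev (d1 (d1 (d3 eta)))) * ut * ut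
    + (2 * ev (d1 (d3 xi)) + ev (d2 (d3 eta)) - ev (d3 (d3 phi))) * ut * uxx
    + 4 * ev (d1 (d3 eta)) * ut * uxt
    + ev (d3 xi) * ut * uxxx
    + 3 * ev (d3 xi) * uxx * uxt
    + 2 * ev (d3 eta) * uxt * uxt
    + 2 * ev (d1 (d3 eta)) * ux * utt
    + ev (d3 eta) * uxx * utt
    + ev (d2 (d3 (d3 xi))) * ux * ux * ux
    + 3 * ev (d3 (d3 xi)) * ux * ux * uxt
    + (- a * ev (d3 xi) + 2 * ev (d1 (d3 (d3 xi))) + ev (d2 (d3 (d3 eta)))
        - ev (d3 (d3 (d3 phi)))) * ux * ux * ut
    + 3 * ev (d3 (d3 xi)) * ux * ut * uxx
    + 4 * ev (d3 (d3 eta)) * ux * ut * uxt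
    + 2 * ev (d1 (d3 (d3 eta))) * ux * ut * ut
    + ev (d3 (d3 eta)) * ut * ut * uxx
    + ev (d3 (d3 eta)) * ux * ux * utt
    + ev (d3 (d3 (d3 xi))) * ux * ux * ux * ut
    + ev (d3 (d3 (d3 eta))) * ux * ux * ut * ut.

#[local] Hint Resolve smooth2_plus smooth2_mult smooth2_const smooth2_on_graph
  smooth2_dx2 smooth2_dt2 smooth2_ex_derive2 smooth3_d1 smooth3_d2 smooth3_d3 : smooth.
#[local] Hint Extern 1 (Ck3 ?k ?g) => apply (fun H : smooth3 g => H k) : smooth.
#[local] Hint Rewrite dx2_plus dt2_plus dx2_mult dt2_mult dx2_const dt2_const
  dx2_on_graph dt2_on_graph using (auto 40 with smooth) : derivatives.
#[local] Hint Rewrite dt2_dx2 d2_d1 d3_d1 d3_d2 using (auto 40 with smooth) : schwarz.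

Lemma prolong3_HR_on_equation a xi eta phi u x t :
  smooth3 xi -> smooth3 eta -> smooth3 phi -> smooth2 u ->
  HR a x t (jet2 u x t) = 0 ->
  let J := jet2 u x t in
  prolong3 xi eta phi (HR a) u x t =
  HR_determining a xi eta phi x t
    (J 0 0)%nat (J 1 0)%nat (J 0 1)%nat (J 2 0)%nat (J 1 1)%nat (J 0 2)%nat (J 3 0)%nat (J 1 2)%nat.
Proof.
  intros Hxi Heta Hphi Hu Heq J; subst J.
  rewrite prolong3_HR; unfold HR, prol_coef, jet2 in *; cbn [Nat.iter nat_rect] in *.
  rewrite charQ_plus_mult.
  autorewrite with derivatives schwarz.
  unfold HR_determining, plus2, mult2, const2, on_graph; cbv zeta.
  replace (dx2 (dx2 (dt2 u)) x t)
    with (dt2 u x t + a * dx2 u x t * (1 - dt2 u x t)) by lra.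
  ring.
Qed.

Definition taylor3 (x0 t0 u0 ux ut uxx uxt utt uxxx uxxt uxtt : R) : R -> R -> R :=
  fun x t => u0 + ux * (x - x0) + ut * (t - t0) + uxx / 2 * ((x - x0) * (x - x0))
    + uxt * ((x - x0) * (t - t0)) + utt / 2 * ((t - t0) * (t - t0))
    + uxxx / 6 * ((x - x0) * (x - x0) * (x - x0))
    + uxxt / 2 * ((x - x0) * (x - x0) * (t - t0))
    + uxtt / 2 * ((x - x0) * (t - t0) * (t - t0)).

Lemma smooth2_taylor3 x0 t0 u0 ux ut uxx uxt utt uxxx uxxt uxtt :
  smooth2 (taylor3 x0 t0 u0 ux ut uxx uxt utt uxxx uxxt uxtt).
Proof.
  unfold taylor3, Rminus, Rdiv.
  repeat first [ apply smooth2_const | apply smooth2_fst | apply smooth2_snd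
               | apply smooth2_plus | apply smooth2_mult ].
Qed.

Lemma dx2_taylor3 x0 t0 u0 ux ut uxx uxt utt uxxx uxxt uxtt :
  dx2 (taylor3 x0 t0 u0 ux ut uxx uxt utt uxxx uxxt uxtt) =
  taylor3 x0 t0 ux uxx uxt uxxx uxxt uxtt 0 0 0.
Proof.
  do 2 (apply functional_extensionality; intro).
  apply is_derive_unique; unfold taylor3; auto_derive; auto; field.
Qed.

Lemma dt2_taylor3 x0 t0 u0 ux ut uxx uxt utt uxxx uxxt uxtt :
  dt2 (taylor3 x0 t0 u0 ux ut uxx uxt utt uxxx uxxt uxtt) =
  taylor3 x0 t0 ut uxt utt uxxt uxtt 0 0 0 0.
Proof.
  do 2 (apply functional_extensionality; intro).
  apply is_derive_unique; unfold taylor3; auto_derive; auto; field.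
Qed.

Lemma taylor3_center x0 t0 u0 ux ut uxx uxt utt uxxx uxxt uxtt :
  taylor3 x0 t0 u0 ux ut uxx uxt utt uxxx uxxt uxtt x0 t0 = u0.
Proof. unfold taylor3; ring. Qed.

#[local] Hint Rewrite dx2_taylor3 dt2_taylor3 taylor3_center : taylor3.

Theorem is_symmetry3_HR_iff a xi eta phi :
  smooth3 xi -> smooth3 eta -> smooth3 phi ->
  is_symmetry3 (HR a) xi eta phi <->
  forall x t u ux ut uxx uxt utt uxxx uxtt,
    HR_determining a xi eta phi x t u ux ut uxx uxt utt uxxx uxtt = 0.
Proof.
  intros Hxi Heta Hphi; split.
  - intros Hsym x t u ux ut uxx uxt utt uxxx uxtt.
    (* a cubic with the given 3-jet, its [u_xxt] chosen so that it solves the equation at (x, t) *)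
    set (p := taylor3 x t u ux ut uxx uxt utt uxxx (ut + a * ux * (1 - ut)) uxtt).
    assert (Heq : HR a x t (jet2 p x t) = 0).
    { unfold HR, jet2, p; cbn [Nat.iter nat_rect]; autorewrite with taylor3; ring. }
    pose proof (Hsym p (smooth2_taylor3 _ _ _ _ _ _ _ _ _ _ _) x t Heq) as Hp.
    rewrite (prolong3_HR_on_equation a xi eta phi p x t) in Hp
      by first [assumption | apply smooth2_taylor3].
    unfold jet2, p in Hp; cbn [Nat.iter nat_rect] in Hp; autorewrite with taylor3 in Hp.
    exact Hp.
  - intros HD u Hu x t Heq.
    rewrite prolong3_HR_on_equation by assumption.
    apply HD.
Qed.

(** * Solving the determining equations *)

Definition affine3 (k0 k1 k2 k3 : R) : R -> R -> R -> R :=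
  fun x t u => k0 + k1 * x + k2 * t + k3 * u.

Lemma d1_affine3 k0 k1 k2 k3 : d1 (affine3 k0 k1 k2 k3) = affine3 k1 0 0 0.
Proof.
  do 3 (apply functional_extensionality; intro).
  apply is_derive_unique; unfold affine3; auto_derive; auto; ring.
Qed.

Lemma d2_affine3 k0 k1 k2 k3 : d2 (affine3 k0 k1 k2 k3) = affine3 k2 0 0 0.
Proof.
  do 3 (apply functional_extensionality; intro).
  apply is_derive_unique; unfold affine3; auto_derive; auto; ring.
Qed.

Lemma d3_affine3 k0 k1 k2 k3 : d3 (affine3 k0 k1 k2 k3) = affine3 k3 0 0 0.
Proof.
  do 3 (apply functional_extensionality; intro).
  apply is_derive_unique; unfold affine3; auto_derive; auto; ring.
Qed.

#[local] Hint Rewrite d1_affine3 d2_affine3 d3_affine3 : affine3.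

Lemma affine3_const_ext f c : (forall x t u, f x t u = c) -> f = affine3 c 0 0 0.
Proof.
  intros Hf; do 3 (apply functional_extensionality; intro).
  unfold affine3; rewrite Hf; ring.
Qed.

Lemma affine_of_derive (g : R -> R) k : (forall y, is_derive g y k) -> forall y, g y = g 0 + k * y.
Proof.
  intros Hg y.
  destruct (MVT_cor4 g (fun _ => k) 0 (Rabs y) (fun c _ => Hg c) y) as [c [Hc _]].
  - rewrite Rminus_0_r; apply Rle_refl.
  - lra.
Qed.

Lemma affine3_of_partials f k1 k2 k3 : Ck3 1 f ->
  d1 f = affine3 k1 0 0 0 -> d2 f = affine3 k2 0 0 0 -> d3 f = affine3 k3 0 0 0 ->
  f = affine3 (f 0 0 0) k1 k2 k3.
Proof.
  intros Hf H1 H2 H3.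
  assert (Hd : forall x t u, is_derive (fun y => f y t u) x k1 /\
                 is_derive (fun s => f x s u) t k2 /\ is_derive (fun w => f x t w) u k3).
  { intros x t u; destruct (Ck3_ex_derive _ _ Hf x t u) as (Ex & Et & Eu).
    split; [|split].
    - replace k1 with (d1 f x t u) by (rewrite H1; unfold affine3; ring).
      exact (Derive_correct _ _ Ex).
    - replace k2 with (d2 f x t u) by (rewrite H2; unfold affine3; ring).
      exact (Derive_correct _ _ Et).
    - replace k3 with (d3 f x t u) by (rewrite H3; unfold affine3; ring).
      exact (Derive_correct _ _ Eu). }
  do 3 (apply functional_extensionality; intro); unfold affine3.
  rewrite (affine_of_derive (fun w => f _ _ w) k3) by (intro; apply Hd).
  rewrite (affine_of_derive (fun s => f _ s 0) k2) by (intro; apply Hd).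
  rewrite (affine_of_derive (fun y => f y 0 0) k1) by (intro; apply Hd).
  ring.
Qed.

Section DeterminingEquations.
Variables (a : R) (xi eta phi : R -> R -> R -> R).
Hypotheses (Ha : a <> 0) (Hxi : smooth3 xi) (Heta : smooth3 eta) (Hphi : smooth3 phi).
Hypothesis HD : forall x t u ux ut uxx uxt utt uxxx uxtt,
  HR_determining a xi eta phi x t u ux ut uxx uxt utt uxxx uxtt = 0.

Ltac simplify_determining :=
  unfold HR_determining in *; cbv beta zeta in *;
  autorewrite with affine3 in *; unfold affine3 in *.

Lemma determining_first_order :
  d2 xi = affine3 0 0 0 0 /\ d3 xi = affine3 0 0 0 0 /\
  d1 eta = affine3 0 0 0 0 /\ d3 eta = affine3 0 0 0 0.
Proof.
  assert (H : forall x t u, d2 xi x t u = 0 /\ d3 xi x t u = 0 /\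
                            d1 eta x t u = 0 /\ d3 eta x t u = 0).
  { intros x t u.
    pose proof (HD x t u 0 0 0 0 0 0 0) as E.
    pose proof (HD x t u 0 0 0 0 0 1 0) as E_uxxx.
    pose proof (HD x t u 0 0 0 0 0 0 1) as E_uxtt.
    pose proof (HD x t u 0 1 0 0 0 0 0) as E_ut.
    pose proof (HD x t u 0 1 0 0 0 1 0) as E_ut_uxxx.
    pose proof (HD x t u 1 0 0 0 0 0 0) as E_ux.
    pose proof (HD x t u 1 0 0 0 0 0 1) as E_ux_uxtt.
    clear HD; simplify_determining; lra. }
  repeat split; apply affine3_const_ext; apply H.
Qed.

(* [HR_determining] writes eta_xt as [d1 (d2 eta)]; it is commuted so that [eta_x = 0] applies. *)
Ltac use_first_order :=
  let Hxi2 := fresh in let Hxi3 := fresh in let Heta1 := fresh in let Heta3 := fresh in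
  destruct determining_first_order as (Hxi2 & Hxi3 & Heta1 & Heta3);
  unfold HR_determining in *; cbv beta zeta in *;
  rewrite <- (d2_d1 eta Heta) in *; rewrite Hxi2, Hxi3, Heta1, Heta3 in *.

Lemma determining_phi_uu_ut : d3 (d3 phi) = affine3 0 0 0 0 /\ d2 (d3 phi) = affine3 0 0 0 0.
Proof.
  assert (H : forall x t u, d3 (d3 phi) x t u = 0 /\ d2 (d3 phi) x t u = 0).
  { intros x t u.
    pose proof (HD x t u 0 0 0 0 0 0 0) as E.
    pose proof (HD x t u 0 0 1 0 0 0 0) as E_uxx.
    pose proof (HD x t u 0 1 0 0 0 0 0) as E_ut.
    pose proof (HD x t u 0 1 1 0 0 0 0) as E_ut_uxx.
    use_first_order; clear HD; simplify_determining; lra. }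
  split; apply affine3_const_ext; apply H.
Qed.

Lemma determining_relations x t u :
  d1 (d1 xi) x t u = 2 * d1 (d3 phi) x t u /\
  d3 phi x t u = - d1 xi x t u /\
  d2 phi x t u = d2 eta x t u + d1 xi x t u /\
  a * d1 phi x t u + d2 phi x t u - d1 (d1 (d2 phi)) x t u = 0 /\
  2 * d1 xi x t u - a * d1 phi x t u - d1 (d1 (d3 phi)) x t u = 0.
Proof.
  pose proof determining_phi_uu_ut as (Hphi33 & Hphi23).
  pose proof (HD x t u 0 0 0 0 0 0 0) as E.
  pose proof (HD x t u 1 0 0 0 0 0 0) as E_ux.
  pose proof (HD x t u 0 1 0 0 0 0 0) as E_ut.
  pose proof (HD x t u 0 0 0 1 0 0 0) as E_uxt.
  pose proof (HD x t u 1 1 0 0 0 0 0) as E_ux_ut.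
  use_first_order; clear HD; rewrite Hphi33, Hphi23 in *; simplify_determining.
  repeat split; try lra; apply (Rmult_eq_reg_l a); try exact Ha; lra.
Qed.

Lemma determining_solution : exists c1 c2 c3 c4,
  xi = affine3 c3 (- c1 / 3) 0 0 /\ eta = affine3 c2 0 c1 0 /\
  phi = affine3 c4 (- 2 * c1 / (3 * a)) (2 * c1 / 3) (c1 / 3).
Proof.
  destruct determining_first_order as (Hxi2 & Hxi3 & Heta1 & Heta3).
  assert (Hpt := determining_relations).
  (* differentiating [phi_u = - xi_x] in x turns the [u_xt]-relation into [xi_xx = 0] *)
  assert (Hxi11 : d1 (d1 xi) = affine3 0 0 0 0).
  { apply affine3_const_ext; intros x t u.
    assert (E : d1 (d3 phi) x t u = - d1 (d1 xi) x t u).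
    { unfold d1 at 1.
      rewrite (Derive_ext _ (fun y => - d1 xi y t u)) by (intro; apply Hpt).
      apply Derive_opp. }
    destruct (Hpt x t u) as [H _]; lra. }
  set (k := d1 xi 0 0 0).
  assert (Hxi1 : d1 xi = affine3 k 0 0 0).
  { apply (affine3_of_partials (d1 xi) 0 0 0 (smooth3_d1 _ Hxi 1%nat) Hxi11).
    - rewrite (d2_d1 xi Hxi), Hxi2; apply d1_affine3.
    - rewrite (d3_d1 xi Hxi), Hxi3; apply d1_affine3. }
  assert (Hphi3 : d3 phi = affine3 (- k) 0 0 0).
  { apply affine3_const_ext; intros x t u.
    destruct (Hpt x t u) as (_ & H & _); rewrite H, Hxi1; unfold affine3; ring. }
  assert (Hphi1 : d1 phi = affine3 (2 * k / a) 0 0 0).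
  { apply affine3_const_ext; intros x t u.
    destruct (Hpt x t u) as (_ & _ & _ & _ & H).
    rewrite Hxi1, Hphi3 in H; autorewrite with affine3 in H; unfold affine3 in H.
    assert (a * (2 * k / a) = 2 * k) by (field; exact Ha).
    apply (Rmult_eq_reg_l a); [lra | exact Ha]. }
  assert (Hphi12 : d1 (d2 phi) = affine3 0 0 0 0).
  { apply affine3_const_ext; intros x t u; unfold d1 at 1.
    rewrite (Derive_ext _ (fun y => d2 eta y t u + k))
      by (intro; destruct (Hpt t0 t u) as (_ & _ & H & _); rewrite H, Hxi1; unfold affine3; ring).
    rewrite Derive_plus, Derive_const.
    - change (d1 (d2 eta) x t u + 0 = 0).
      rewrite <- (d2_d1 eta Heta), Heta1; autorewrite with affine3; unfold affine3; ring.
    - exact (proj1 (Ck3_ex_derive _ _ (smooth3_d2 _ Heta 1%nat) x t u)).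
    - apply ex_derive_const. }
  assert (Hphi2 : d2 phi = affine3 (- 2 * k) 0 0 0).
  { apply affine3_const_ext; intros x t u.
    destruct (Hpt x t u) as (_ & _ & _ & H & _).
    rewrite Hphi12, Hphi1 in H; autorewrite with affine3 in H; unfold affine3 in H.
    assert (a * (2 * k / a) = 2 * k) by (field; exact Ha).
    lra. }
  assert (Heta2 : d2 eta = affine3 (- 3 * k) 0 0 0).
  { apply affine3_const_ext; intros x t u.
    destruct (Hpt x t u) as (_ & _ & H & _).
    rewrite Hphi2, Hxi1 in H; unfold affine3 in H; lra. }
  exists (- 3 * k), (eta 0 0 0), (xi 0 0 0), (phi 0 0 0); split; [|split].
  - transitivity (affine3 (xi 0 0 0) k 0 0);
      [apply affine3_of_partials; auto | f_equal; field].
  - transitivity (affine3 (eta 0 0 0) 0 (- 3 * k) 0);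
      [apply affine3_of_partials; auto | f_equal; field].
  - transitivity (affine3 (phi 0 0 0) (2 * k / a) (- 2 * k) (- k));
      [apply affine3_of_partials; auto | f_equal; field; auto].
Qed.

End DeterminingEquations.

Lemma HR_determining_affine a c1 c2 c3 c4 x t u ux ut uxx uxt utt uxxx uxtt : a <> 0 ->
  HR_determining a (affine3 c3 (- c1 / 3) 0 0) (affine3 c2 0 c1 0)
    (affine3 c4 (- 2 * c1 / (3 * a)) (2 * c1 / 3) (c1 / 3))
    x t u ux ut uxx uxt utt uxxx uxtt = 0.
Proof.
  intros Ha; unfold HR_determining; cbv beta zeta.
  autorewrite with affine3; unfold affine3; field; exact Ha.
Qed.

Theorem HR_symmetry_classification a xi eta phi :
  a <> 0 -> smooth3 xi -> smooth3 eta -> smooth3 phi ->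
  is_symmetry3 (HR a) xi eta phi <->
  exists c1 c2 c3 c4 : R, forall x t u : R,
    xi x t u = - x / 3 * c1 + c3 /\
    eta x t u = c1 * t + c2 /\
    phi x t u = (2 * t / 3 + u / 3 - 2 * x / (3 * a)) * c1 + c4.
Proof.
  intros Ha Hxi Heta Hphi.
  rewrite is_symmetry3_HR_iff by assumption; split.
  - intros HD.
    destruct (determining_solution a xi eta phi Ha Hxi Heta Hphi HD)
      as (c1 & c2 & c3 & c4 & -> & -> & ->).
    exists c1, c2, c3, c4; intros x t u; unfold affine3.
    repeat split; field; exact Ha.
  - intros (c1 & c2 & c3 & c4 & Hc).
    assert (Exi : xi = affine3 c3 (- c1 / 3) 0 0).
    { do 3 (apply functional_extensionality; intro).
      rewrite (proj1 (Hc _ _ _)); unfold affine3; field. }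
    assert (Eeta : eta = affine3 c2 0 c1 0).
    { do 3 (apply functional_extensionality; intro).
      rewrite (proj1 (proj2 (Hc _ _ _))); unfold affine3; ring. }
    assert (Ephi : phi = affine3 c4 (- 2 * c1 / (3 * a)) (2 * c1 / 3) (c1 / 3)).
    { do 3 (apply functional_extensionality; intro).
      rewrite (proj2 (proj2 (Hc _ _ _))); unfold affine3; field; exact Ha. }
    subst xi eta phi; intros; apply HR_determining_affine, Ha.
Qed.

Theorem mainTheorem1 :
  forall (a : R), a <> 0 ->
  forall xi eta phi : R -> R -> R -> R,
    smooth3 xi -> smooth3 eta -> smooth3 phi ->
    (is_symmetry3 (HR a) xi eta phi <->
       exists c1 c2 c3 c4 : R, forall x t u : R,
         xi x t u = - x / 3 * c1 + c3 /\
         eta x t u = c1 * t + c2 /\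
         phi x t u = (2 * t / 3 + u / 3 - 2 * x / (3 * a)) * c1 + c4) /\
    (is_symmetry3 (HR a) xi eta phi <->
       exists k1 k2 k3 k4 : R, forall x t u : R,
         xi x t u = k1 * vxi v1 x t u + k2 * vxi v2 x t u
                    + k3 * vxi (v3 a) x t u + k4 * vxi (v4 a) x t u /\
         eta x t u = k1 * veta v1 x t u + k2 * veta v2 x t u
                    + k3 * veta (v3 a) x t u + k4 * veta (v4 a) x t u /\
         phi x t u = k1 * vphi v1 x t u + k2 * vphi v2 x t u
                    + k3 * vphi (v3 a) x t u + k4 * vphi (v4 a) x t u).
Proof.
  intros a Ha xi eta phi Hxi Heta Hphi.
  pose proof (HR_symmetry_classification a xi eta phi Ha Hxi Heta Hphi) as Hcl.
  split; [exact Hcl|].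
  rewrite Hcl; unfold vxi, veta, vphi, v1, v2, v3, v4; simpl; split.
  - intros (c1 & c2 & c3 & c4 & H).
    exists c3, c2, (a * c4), (c1 / 3); intros x t u.
    destruct (H x t u) as (H1 & H2 & H3); rewrite H1, H2, H3.
    repeat split; field; exact Ha.
  - intros (k1 & k2 & k3 & k4 & H).
    exists (3 * k4), k2, k1, (k3 / a); intros x t u.
    destruct (H x t u) as (H1 & H2 & H3); rewrite H1, H2, H3.
    repeat split; field; exact Ha.
Qed.
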